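(* For all $n,k\in\mathbb N$, $t\in(0,1)$, and all $\alpha,\beta\subseteq\{1,\dots,n\}$, $$A_{n,k,t}[\alpha]\,A_{n,k,t}[\beta]\ \ge\ A_{n,k,t}[\alpha\cup\beta]\,A_{n,k,t}[\alpha\cap\beta],$$ and all principal minors of $A_{n,k,t}$ are positive.
   Context: For $x\in\mathbb R$, $x_+=\max\{x,0\}$. For $k\in\mathbb{N}$ and $t\in(0,1)$, $A_{\infty,k,t}=(A(i,j))_{i,j\ge1}$ is the infinite Toeplitz Hessenberg matrix with $A(i,j)=a_{j-i}$ for $j\ge i$, $A(i+1,i)=1$, and $A(i,j)=0$ for $i\ge j+2$, where $(a_0,a_1,\ldots)$ is the unique sequence for which the leading principal minors satisfy $\det A(\{1,\dots,n\})=t^{(n-k-1)_+}$ for all $n\in\mathbb N$. $A_{n,k,t}$ is the leading principal $n\times n$ submatrix of $A_{\infty,k,t}$. $A[\alpha]$ denotes the principal minor (determinant) of $A$ with rows and columns indexed by $\alpha$, with $A[\emptyset]=1$. *)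

From HB Require Import structures.
From mathcomp Require Import all_boot all_order all_algebra.
Set Implicit Arguments. Unset Strict Implicit. Unset Printing Implicit Defensive.
Import Order.TTheory GRing.Theory Num.Theory.
Local Open Scope ring_scope.

(* The n x n leading principal submatrix of the infinite Toeplitz Hessenberg
   matrix built from the sequence a = (a_0, a_1, ...):
   entry (i,j) (0-based) is a_{j-i} if i <= j, 1 if i = j+1, 0 otherwise. *)
Definition toepHess (R : ringType) (a : nat -> R) (n : nat) : 'M[R]_n :=
  \matrix_(i < n, j < n)
    if (i <= j)%N then a (j - i)%N
    else if (i == j.+1 :> nat) then 1 else 0.

(* Principal minor A[alpha]: determinant of the submatrix with rows and
   columns indexed by alpha (listed increasingly); A[set0] = 1. *)
Definition pminor (R : comRingType) (n : nat) (A : 'M[R]_n) (alpha : {set 'I_n}) : R :=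
  \det (mxsub (fun i : 'I_#|alpha| => enum_val i)
              (fun j : 'I_#|alpha| => enum_val j) A).

(* a is the sequence defining A_{infty,k,t}: every leading principal minor
   det A({1..n}) equals t^{(n-k-1)_+}  (nat subtraction is truncated). *)
Definition is_Akt_seq (R : comRingType) (k : nat) (t : R) (a : nat -> R) : Prop :=
  forall n : nat, \det (toepHess a n) = t ^+ (n - k.+1)%N.

From HB Require Import structures.
From mathcomp Require Import all_boot all_order all_algebra.
From mathcomp Require Import zify.
Import Order.TTheory GRing.Theory Num.Theory.

(* Every principal minor of A_{n,k,t} is a power of t.  Listing alpha
   increasingly as s_0 < ... < s_{m-1}, the entry (s_p, s_q) vanishes as soon
   as s_p > s_q + 1, so a gap s_{i+1} > s_i + 1 makes the submatrix block upper
   triangular; the minor is thus a product over maximal runs of consecutive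
   indices, and a run of length r contributes the leading minor
   t^{(r-k-1)_+}.  Hence A[alpha] = t^{|W(alpha)|}, where W(alpha) is the set
   of x with x, x+1, ..., x+k+1 all in alpha.  Clearly
   W(alpha cap beta) = W(alpha) cap W(beta) and
   W(alpha) cup W(beta) is contained in W(alpha cup beta), so the exponent is
   supermodular, and since 0 < t < 1 the minors are log-submodular. *)

Definition increasing_below (m : nat) (s : nat -> nat) : Prop :=
  forall i j, i < j < m -> s i < s j.

Section IncreasingBelow.

Context {m : nat} {s : nat -> nat}.
Hypothesis s_incr : increasing_below m s.

Lemma increasing_below_leq i j : i <= j < m -> s i <= s j.
Proof.
case/andP; rewrite leq_eqVlt => /orP[/eqP -> //|lt_ij lt_jm].
by apply: ltnW; apply: s_incr; rewrite lt_ij.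
Qed.

Lemma increasing_below_addn i d : i + d < m -> s i + d <= s (i + d).
Proof.
elim: d => [|d IHd] lt_idm; first by rewrite !addn0.
rewrite addnS in lt_idm *.
have := IHd (ltnW lt_idm); have := s_incr (i + d) (i + d).+1; lia.
Qed.

End IncreasingBelow.

Lemma increasing_belowW {m1 m2 s} :
  increasing_below (m1 + m2) s -> increasing_below m1 s.
Proof. by move=> s_incr i j lt_ijm; apply: s_incr; lia. Qed.

Lemma increasing_below_shift {m1 m2 s} :
  increasing_below (m1 + m2) s -> increasing_below m2 (fun i => s (m1 + i)).
Proof. by move=> s_incr i j lt_ijm; apply: s_incr; lia. Qed.

Lemma increasing_below_nth {L : seq nat} :
  sorted ltn L -> increasing_below (size L) (nth 0 L).
Proof.
move=> sortL i j /andP[lt_ij lt_jL].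
by apply: (sorted_ltn_nth ltn_trans 0 sortL) => //; rewrite inE; lia.
Qed.

Definition count_windows (k m : nat) (s : nat -> nat) : nat :=
  \sum_(i < m) ((i + k.+1 < m) && (s (i + k.+1) == s i + k.+1)).

Lemma eq_count_windows {k m s s'} :
  {in gtn m, s =1 s'} -> count_windows k m s = count_windows k m s'.
Proof.
move=> eq_s; apply: eq_bigr => i _.
by case: ltnP => //= lt_ikm; rewrite !eq_s // inE; lia.
Qed.

Lemma count_windows_addn k m c : count_windows k m (addn c) = m - k.+1.
Proof.
rewrite /count_windows; under eq_bigr => i _ do rewrite addnA eqxx andbT.
elim: m => [|m IHm]; first by rewrite big_ord0.
rewrite big_ord_recl /= add0n.
under eq_bigr => i _ do rewrite /bump /= add1n addSn ltnS.
rewrite IHm; lia.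
Qed.

Lemma count_windows_split k m1 m2 s :
  increasing_below (m1 + m2) s -> 0 < m1 -> (s m1.-1).+1 < s m1 ->
  count_windows k (m1 + m2) s =
    count_windows k m1 s + count_windows k m2 (fun i => s (m1 + i)).
Proof.
move=> s_incr m1_gt0 gap; rewrite /count_windows big_split_ord.
congr addn; apply: eq_bigr => i _ /=; last by rewrite -!addnA ltn_add2l.
case: (ltnP (i + k.+1) m1) => [lt_ikm1|le_m1ik].
  by rewrite (leq_trans lt_ikm1 (leq_addr _ _)).
case: ltnP => //= lt_ikm.
have lt_im1 := ltn_ord i.
have across_gap := increasing_below_addn s_incr m1 (i + k.+1 - m1) ltac:(lia).
have before_gap := increasing_below_addn s_incr i (m1.-1 - i) ltac:(lia).
rewrite subnKC // in across_gap.
rewrite subnKC in before_gap; last by rewrite -ltnS prednK.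
suff /negbTE -> : s (i + k.+1) != s i + k.+1 by [].
by apply/eqP; lia.
Qed.

Lemma increasing_below_gapP {m s} : increasing_below m s ->
  (exists2 i, i.+1 < m & (s i).+1 < s i.+1) \/ {in gtn m, s =1 addn (s 0)}.
Proof.
move=> s_incr; case: (boolP [exists i : 'I_m, (i.+1 < m) && (s i.+1 != (s i).+1)]).
  case/existsP=> i /andP[lt_i1m neq_si]; left; exists (val i) => //.
  by rewrite ltn_neqAle eq_sym neq_si /=; apply: s_incr; rewrite ltnSn.
rewrite negb_exists => /forallP no_gap; right; elim=> [|i IHi]; rewrite inE => lt_im.
  by rewrite addn0.
have := no_gap (Ordinal (ltnW lt_im)); rewrite /= lt_im negbK => /eqP ->.
by rewrite IHi ?addnS // inE ltnW.
Qed.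

Lemma sorted_all_consecutive {L : seq nat} i D : sorted ltn L -> i < size L ->
  all (fun d => nth 0 L i + d \in L) (iota 0 D.+1) =
  (i + D < size L) && (nth 0 L (i + D) == nth 0 L i + D).
Proof.
move=> sortL lt_iL; have L_incr := increasing_below_nth sortL.
elim: D => [|D IHD]; first by rewrite /= !addn0 mem_nth // lt_iL eqxx.
rewrite -addn1 iotaD all_cat IHD /= andbT add0n !addnS.
case: (boolP ((i + D < size L) && _)) => /= [/andP[lt_iDL /eqP run_to_D]|no_run].
  apply/idP/andP => [/(nthP 0) [j lt_jL nth_j]|[lt_iD1L /eqP <-]]; last exact: mem_nth.
  (* restated at type nat, so that lia sees the same atoms everywhere *)
  have {}lt_jL : j < size L := lt_jL.
  have {}nth_j : nth 0 L j = (nth 0 L i + D).+1 := nth_j.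
  have lt_iDj : i + D < j.
    rewrite ltnNge; apply/negP => le_jiD.
    by have := increasing_below_leq L_incr j (i + D) ltac:(lia); lia.
  have lt_iD1L : (i + D).+1 < size L by lia.
  split => //; apply/eqP.
  have := increasing_below_leq L_incr (i + D).+1 j ltac:(lia).
  have := L_incr (i + D) (i + D).+1 ltac:(lia); lia.
apply/esym/negbTE; apply: contra no_run => /andP[lt_iD1L /eqP run_to_D1].
have lt_iDL : i + D < size L by lia.
have := increasing_below_addn L_incr i D lt_iDL.
have := L_incr (i + D) (i + D).+1 ltac:(lia).
by rewrite lt_iDL /= => *; apply/eqP; lia.
Qed.

Section IndexSets.

Context {n : nat}.
Implicit Types A B : {set 'I_n}.

Definition set_seq A : seq nat := [seq val x | x in A].

Lemma size_set_seq A : size (set_seq A) = #|A|.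
Proof. exact: size_image. Qed.

Lemma nth_set_seq A (i : 'I_#|A|) : nth 0 (set_seq A) i = val (enum_val i).
Proof. exact: nth_image. Qed.

Lemma sorted_set_seq A : sorted ltn (set_seq A).
Proof.
rewrite /set_seq /image_mem.
have -> : enum A = [seq x <- enum 'I_n | x \in A].
  by rewrite /enum_mem (@eq_filter _ (mem 'I_n) predT) // filter_predT.
rewrite sorted_map; apply: sorted_filter; first exact: ltn_trans.
by rewrite -sorted_map val_enum_ord iota_ltn_sorted.
Qed.

Lemma set_seqP A v : reflect (exists2 x, x \in A & v = val x) (v \in set_seq A).
Proof.
by apply: (iffP mapP) => -[x A_x ->]; exists x; rewrite ?mem_enum in A_x *.
Qed.

Lemma mem_set_seqI A B v :
  (v \in set_seq (A :&: B)) = (v \in set_seq A) && (v \in set_seq B).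
Proof.
apply/set_seqP/andP => [[x]|[/set_seqP[x A_x ->] /set_seqP[y B_y /val_inj eq_xy]]].
  by rewrite inE => /andP[A_x B_x] ->; split; apply/set_seqP; exists x.
by exists x; rewrite // inE A_x eq_xy B_y.
Qed.

Lemma mem_set_seqUl A B v : v \in set_seq A -> v \in set_seq (A :|: B).
Proof. by case/set_seqP=> x A_x ->; apply/set_seqP; exists x; rewrite // inE A_x. Qed.

Lemma mem_set_seqUr A B v : v \in set_seq B -> v \in set_seq (A :|: B).
Proof. by rewrite setUC; apply: mem_set_seqUl. Qed.

Definition windows k A : {set 'I_n} :=
  [set x : 'I_n | all (fun d => val x + d \in set_seq A) (iota 0 k.+2)].

Lemma windowsI k A B : windows k (A :&: B) = windows k A :&: windows k B.
Proof.
by apply/setP => x; rewrite !inE -all_predI; apply: eq_all => d; apply: mem_set_seqI.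
Qed.

Lemma windowsU k A B : windows k A :|: windows k B \subset windows k (A :|: B).
Proof.
apply/subsetP => x; rewrite !inE => /orP[] /sub_all-> // d.
  exact: mem_set_seqUl.
exact: mem_set_seqUr.
Qed.

Lemma card_windows_supermodular k A B :
  #|windows k A| + #|windows k B| <= #|windows k (A :|: B)| + #|windows k (A :&: B)|.
Proof.
rewrite -cardsUI windowsI leq_add2r; apply/subset_leq_card/windowsU.
Qed.

Lemma windows_sub k A : windows k A \subset A.
Proof.
apply/subsetP => x; rewrite inE /= addn0 => /andP[/set_seqP[y A_y /val_inj ->] _].
exact: A_y.
Qed.

Lemma card_windows k A : #|windows k A| = count_windows k #|A| (nth 0 (set_seq A)).
Proof.
transitivity (\sum_(x in A) (x \in windows k A)).
  rewrite -sum1_card big_mkcond [RHS]big_mkcond; apply: eq_bigr => x _.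
  by case: ifPn => [/(subsetP (windows_sub k A)) ->|]; case: (x \in A).
rewrite big_enum_val /count_windows; apply: eq_bigr => i _.
have := sorted_all_consecutive i k.+1 (sorted_set_seq A).
by rewrite inE -nth_set_seq size_set_seq => ->.
Qed.

End IndexSets.

Local Open Scope ring_scope.

Definition toepHess_entry {R : nzRingType} (a : nat -> R) (i j : nat) : R :=
  if (i <= j)%N then a (j - i)%N else if i == j.+1 then 1 else 0.

Definition toepHess_sub {R : nzRingType} (a : nat -> R) (m : nat) (s : nat -> nat) :
    'M[R]_m :=
  \matrix_(i < m, j < m) toepHess_entry a (s i) (s j).

Section ToeplitzHessenbergSubmatrix.

Context {R : comNzRingType} {a : nat -> R}.

Lemma eq_toepHess_sub {m s s'} :
  {in gtn m, s =1 s'} -> toepHess_sub a m s = toepHess_sub a m s'.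
Proof. by move=> eq_s; apply/matrixP => i j; rewrite !mxE !eq_s ?inE. Qed.

Lemma toepHess_sub_addn m c : toepHess_sub a m (addn c) = toepHess a m.
Proof.
by apply/matrixP => i j; rewrite !mxE /toepHess_entry leq_add2l subnDl -addnS eqn_add2l.
Qed.

Lemma det_toepHess_sub_split m1 m2 s :
  increasing_below (m1 + m2) s -> (0 < m1)%N -> ((s m1.-1).+1 < s m1)%N ->
  \det (toepHess_sub a (m1 + m2) s) =
    \det (toepHess_sub a m1 s) * \det (toepHess_sub a m2 (fun i => s (m1 + i)%N)).
Proof.
move=> s_incr m1_gt0 gap; rewrite -[toepHess_sub _ _ _]submxK.
have -> : dlsubmx (toepHess_sub a (m1 + m2) s) = 0.
  apply/matrixP => i j; rewrite !mxE /toepHess_entry /=.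
  have lt_im2 := ltn_ord i; have lt_jm1 := ltn_ord j.
  have := increasing_below_leq s_incr m1 (m1 + i)%N ltac:(lia).
  have := increasing_below_leq s_incr j m1.-1 ltac:(lia).
  move=> before_gap after_gap; case: leqP => [|_]; first lia.
  by case: eqP => //; lia.
by rewrite det_ublock; congr (_ * _); congr (\det _); apply/matrixP => i j; rewrite !mxE.
Qed.

Lemma det_toepHess_sub {k} {t : R} {m s} : is_Akt_seq k t a ->
  increasing_below m s -> \det (toepHess_sub a m s) = t ^+ count_windows k m s.
Proof.
move=> a_Akt; elim/ltn_ind: m s => m IHm s s_incr.
case: (increasing_below_gapP s_incr) => [[i lt_i1m gap]|run].
  have [q m_eq] : exists q, m = (i.+1 + q)%N by exists (m - i.+1)%N; rewrite subnKC // ltnW.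
  subst m.
  rewrite det_toepHess_sub_split // count_windows_split // exprD.
  congr (_ * _); apply: IHm; rewrite ?addSn ?ltnS ?leq_addl ?leq_addr //.
    exact: increasing_belowW s_incr.
  exact: increasing_below_shift s_incr.
by rewrite (eq_toepHess_sub run) toepHess_sub_addn a_Akt (eq_count_windows run)
  count_windows_addn.
Qed.

End ToeplitzHessenbergSubmatrix.

Lemma pminor_toepHess {R : comNzRingType} {k} {t : R} {a n} (A : {set 'I_n}) :
  is_Akt_seq k t a -> pminor (toepHess a n) A = t ^+ #|windows k A|.
Proof.
move=> a_Akt; rewrite card_windows -(det_toepHess_sub a_Akt); last first.
  by have := increasing_below_nth (sorted_set_seq A); rewrite size_set_seq.
by congr (\det _); apply/matrixP => i j; rewrite !mxE !nth_set_seq.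
Qed.

Theorem mainTheorem3 (R : realFieldType) (n k : nat) (t : R)
  (ht0 : 0 < t) (ht1 : t < 1) (a : nat -> R) (ha : is_Akt_seq k t a) :
  (forall alpha beta : {set 'I_n},
     pminor (toepHess a n) alpha * pminor (toepHess a n) beta
     >= pminor (toepHess a n) (alpha :|: beta) * pminor (toepHess a n) (alpha :&: beta))
  /\ (forall alpha : {set 'I_n}, 0 < pminor (toepHess a n) alpha).
Proof.
split=> [alpha beta|alpha]; rewrite !(pminor_toepHess _ ha); last exact: exprn_gt0.
rewrite -!exprD ler_wiXn2l ?ltW //.
exact: card_windows_supermodular.
Qed.
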